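(* For any two groups of agents with additive utilities, with $n=n_1+n_2$ agents in total, there exists an allocation that is EF$(n-1)$ for every agent.
   Context: There is a finite set $G$ of goods and two groups $A_1,A_2$ with $n_1,n_2\ge1$ agents. Each agent has an additive utility $u_a(X)=\sum_{g\in X}u_a(\{g\})\ge0$. An allocation is a partition $(G_1,G_2)$ of $G$; agents of $A_i$ get $u_a(G_i)$. For integer $c\ge0$, the allocation is EF$c$ for $a\in A_i$ if there is $C\subseteq G_{3-i}$ with $|C|\le c$ and $u_a(G_i)\ge u_a(G_{3-i}\setminus C)$. *)

From HB Require Import structures.
From mathcomp Require Import all_boot all_order all_algebra.
Set Implicit Arguments. Unset Strict Implicit. Unset Printing Implicit Defensive.
Import Order.TTheory GRing.Theory Num.Theory.
Local Open Scope ring_scope.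

Definition util (R : numDomainType) (G : finType) (v : G -> R) (X : {set G}) : R :=
  \sum_(g in X) v g.

Definition EFc (R : numDomainType) (G : finType) (c : nat) (v : G -> R)
    (Own Oth : {set G}) : Prop :=
  exists C : {set G}, [/\ C \subset Oth, (#|C| <= c)%N &
                         util v (Oth :\: C) <= util v Own].

From HB Require Import structures.
From mathcomp Require Import all_boot all_order all_algebra.
From mathcomp Require Import ring lra.
Set Implicit Arguments. Unset Strict Implicit. Unset Printing Implicit Defensive.
Import Order.TTheory GRing.Theory Num.Theory.
Local Open Scope ring_scope.

(* Start from the fractional allocation giving every good half to each group;
   every agent values both halves equally.  Keep the values of all agents but
   one fixed agent b of group 2 (n - 1 linear constraints) and move to a vertex
   of the resulting polytope inside [0,1]^G: a nonzero kernel vector supported on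
   the fractional goods exists while there are more than n - 1 of them, so at
   most n - 1 goods stay fractional.  Round at 1/2: each constrained agent
   values either side, minus the fractional goods, at most as much as the other
   side, and b picks its preferred side. *)

Section Orthogonal.
Variables (F : fieldType) (G : finType).

Definition dot (w x : G -> F) : F := \sum_g w g * x g.

Lemma sum_mul_delta (f : G -> F) (a : G) : \sum_g f g * (a == g)%:R = f a.
Proof.
rewrite (bigD1 a) //= eqxx mulr1 big1 ?addr0 // => g /negbTE ne_g.
by rewrite eq_sym ne_g mulr0.
Qed.

Lemma dot_shift (w x d : G -> F) (t : F) :
  dot w (fun g => x g + t * d g) = dot w x + t * dot w d.
Proof.
by rewrite /dot mulr_sumr -big_split; apply: eq_bigr => g _; rewrite mulrDr mulrCA.
Qed.

Lemma exists_orthogonal (I : finType) (J : {set I}) (w : I -> G -> F)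
    (S : {set G}) :
  (#|J| < #|S|)%N ->
  exists d : G -> F, [/\ forall g, g \notin S -> d g = 0,
    exists g, d g != 0 & forall i, i \in J -> dot (w i) d = 0].
Proof.
move=> ltJS.
pose B : 'M[F]_(#|S|, #|J|) := \matrix_(j, i) w (enum_val i) (enum_val j).
have /existsP [k /existsP [j Kkj]] : [exists k, exists j, kermx B k j != 0].
  apply: contraTT ltJS => /existsPn K0.
  have /eqP : kermx B = 0.
    by apply/matrixP => k j; move/existsPn: (K0 k) => /(_ j)/negPn/eqP ->; rewrite mxE.
  rewrite -mxrank_eq0 mxrank_ker subn_eq0 -leqNgt.
  by move=> /leq_trans; apply; apply: rank_leq_col.
(* d is a nonzero row of the kernel of B, read on S through enum_val. *)
pose d g := \sum_j' kermx B k j' * (enum_val j' == g)%:R.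
exists d; split.
- move=> g gS; rewrite /d big1 // => j' _.
  by case: eqP => [eq_g|]; [rewrite -eq_g enum_valP in gS | rewrite mulr0].
- exists (enum_val j); rewrite /d (bigD1 j) //= eqxx mulr1 big1 ?addr0 //.
  by move=> j' /negbTE nej; rewrite (inj_eq enum_val_inj) nej mulr0.
- move=> i Ji; rewrite -(enum_rankK_in Ji Ji).
  transitivity ((kermx B *m B) k (enum_rank_in Ji i)); last by rewrite mulmx_ker mxE.
  rewrite /dot mxE; under eq_bigr do rewrite mulr_sumr.
  rewrite exchange_big; apply: eq_bigr => j' _; rewrite mxE.
  under eq_bigr do rewrite mulrCA.
  by rewrite -mulr_sumr sum_mul_delta mxE.
Qed.
End Orthogonal.

Lemma EFc_of_util_le (R : numDomainType) (G : finType) (c : nat) (v : G -> R)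
    (Own Oth : {set G}) :
  util v Oth <= util v Own -> EFc c v Own Oth.
Proof. by exists set0; rewrite sub0set cards0 setD0. Qed.

Section Rounding.
Variable R : realFieldType.

(* How far one may move from x along d and stay in [0,1]; 0 when d = 0. *)
Definition step_bound (x d : R) : R := (if 0 < d then 1 - x else x) / `|d|.

Lemma step_bound_ge0 (x d : R) : 0 <= x <= 1 -> 0 <= step_bound x d.
Proof.
by case/andP=> x0 x1; rewrite divr_ge0 //; case: ifP; rewrite ?subr_ge0.
Qed.

Lemma step_within (x d t : R) :
  0 <= x <= 1 -> 0 <= t <= step_bound x d -> 0 <= x + t * d <= 1.
Proof.
rewrite /step_bound => /andP [x0 x1] /andP [t0].
case: (ltrgtP d 0) => [dn|dp|->]; last by rewrite mulr0 addr0 x0 x1.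
- rewrite ltr0_norm // ler_pdivlMr ?oppr_gt0 // => tdx.
  have : t * d <= 0 by rewrite mulr_ge0_le0 // ltW.
  move=> ?; apply/andP; split; lra.
- rewrite gtr0_norm // ler_pdivlMr // => tdx.
  have : 0 <= t * d by rewrite mulr_ge0 // ltW.
  move=> ?; apply/andP; split; lra.
Qed.

Lemma step_bound_hits (x d : R) : d != 0 -> ~~ (0 < x + step_bound x d * d < 1).
Proof.
rewrite /step_bound => d_neq0; case: ifP => [dp|dn].
  by rewrite gtr0_norm // divfK // subrKC ltxx andbF.
by rewrite ler0_norm ?leNgt ?dn // divrN mulNr divfK // subrr ltxx.
Qed.

Variable G : finType.

Definition frac (x : G -> R) : {set G} := [set g | 0 < x g < 1].

Definition in_box (x : G -> R) := forall g, 0 <= x g <= 1.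

Lemma round_step (I : finType) (J : {set I}) (w : I -> G -> R) (x : G -> R) :
  in_box x -> (#|J| < #|frac x|)%N ->
  exists y : G -> R, [/\ in_box y,
    forall i, i \in J -> dot (w i) y = dot (w i) x & frac y \proper frac x].
Proof.
move=> x_box /(exists_orthogonal w) [d [d_supp [g1 dg1] d_orth]].
have d_frac g : d g != 0 -> 0 < x g < 1.
  by apply: contraR => /negbTE xg; rewrite d_supp ?inE ?xg ?eqxx.
pose bound g := step_bound (x g) (d g).
have [gs dgs gs_min] := @arg_minP _ _ _ g1 [pred g | d g != 0] bound dg1.
pose y g := x g + bound gs * d g.
have y_frac g : g \in frac y -> g \in frac x.
  rewrite !inE /y; case: (eqVneq (d g) 0) => [->|/d_frac //].
  by rewrite mulr0 addr0.
exists y; split.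
- move=> g; rewrite /y; case: (eqVneq (d g) 0) => [->|dg]; first by rewrite mulr0 addr0.
  by apply: step_within => //; rewrite step_bound_ge0 ?gs_min.
- by move=> i Ji; rewrite dot_shift d_orth // mulr0 addr0.
- apply/properP; split; first by apply/subsetP.
  by exists gs; rewrite inE ?d_frac ?step_bound_hits.
Qed.

Lemma exists_near_integral (I : finType) (J : {set I}) (w : I -> G -> R)
    (x : G -> R) :
  in_box x ->
  exists y : G -> R, [/\ in_box y,
    forall i, i \in J -> dot (w i) y = dot (w i) x & (#|frac y| <= #|J|)%N].
Proof.
elim: {x}_.+1 {-2}x (ltnSn #|frac x|) => // n IH x lt_x_n x_box.
have [le_x_J | lt_J_x] := leqP #|frac x| #|J|; first by exists x.
have [y [y_box wy y_proper]] := round_step w x_box lt_J_x.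
have [|z [z_box wz z_small]] := IH y _ y_box.
  by apply: leq_trans (proper_card y_proper) _.
by exists z; split => // i Ji; rewrite wz ?wy.
Qed.

Definition round_half (y : G -> R) : {set G} := [set g | 1 <= 2 * y g].

Lemma EFc_drop_frac (c : nat) (v y : G -> R) (Own Oth : {set G}) :
  (#|frac y| <= c)%N -> util v (Oth :\: frac y) <= util v Own -> EFc c v Own Oth.
Proof.
move=> small le_v; exists (Oth :&: frac y); split; first exact: subsetIl.
  by apply: leq_trans small; apply/subset_leq_card/subsetIr.
by rewrite setDIr setDv set0U.
Qed.

Lemma util_round_half_le (v y : G -> R) :
  (forall g, 0 <= v g) -> in_box y -> dot v y = (\sum_g v g) / 2 ->
  util v (~: round_half y :\: frac y) <= util v (round_half y) /\
  util v (round_half y :\: frac y) <= util v (~: round_half y).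
Proof.
move=> v_ge0 y_box balanced.
have sum0 : \sum_g v g * (2 * y g - 1) = 0.
  rewrite (eq_bigr (fun g => 2 * (v g * y g) - v g)); last by move=> g _; ring.
  by rewrite sumrB -mulr_sumr -/(dot v y) balanced; field.
split; rewrite -subr_ge0 /util big_mkcond [X in _ - X]big_mkcond -sumrB /=.
- rewrite -[X in X <= _]sum0; apply: ler_sum => g _.
  rewrite !inE; have /andP [y0 y1] := y_box g; have := v_ge0 g.
  by case: (leP 1 (2 * y g)); case: (ltP 0 (y g)); case: (ltP (y g) 1) => /=; nra.
- rewrite -[X in X <= _]oppr0 -[X in - X <= _]sum0 -sumrN; apply: ler_sum => g _.
  rewrite !inE; have /andP [y0 y1] := y_box g; have := v_ge0 g.
  by case: (leP 1 (2 * y g)); case: (ltP 0 (y g)); case: (ltP (y g) 1) => /=; nra.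
Qed.

Lemma EFc_round_half (c : nat) (v y : G -> R) :
    (forall g, 0 <= v g) -> in_box y -> dot v y = (\sum_g v g) / 2 ->
    (#|frac y| <= c)%N ->
  EFc c v (round_half y) (~: round_half y) /\
  EFc c v (~: round_half y) (round_half y).
Proof.
move=> v_ge0 y_box balanced small.
have [le1 le2] := util_round_half_le v_ge0 y_box balanced.
by split; apply: EFc_drop_frac small _.
Qed.

End Rounding.

Theorem mainTheorem13 (R : realFieldType) (G A1 A2 : finType)
    (u1 : A1 -> G -> R) (u2 : A2 -> G -> R)
    (hn1 : (1 <= #|A1|)%N) (hn2 : (1 <= #|A2|)%N)
    (hu1 : forall a g, 0 <= u1 a g) (hu2 : forall a g, 0 <= u2 a g) :
  exists G1 : {set G},
    (forall a : A1, EFc (#|A1| + #|A2| - 1)%N (u1 a) G1 (~: G1)) /\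
    (forall a : A2, EFc (#|A1| + #|A2| - 1)%N (u2 a) (~: G1) G1).
Proof.
have [b _] := card_gt0P hn2.
pose w (i : A1 + A2) := match i with inl a => u1 a | inr a => u2 a end.
pose J := [set~ inr b : A1 + A2].
have x0_box : in_box (fun _ : G => 2^-1 : R).
  by move=> g; rewrite invr_ge0 ler0n invf_le1 ?ler1n ?ltr0n.
have [y [y_box wy y_small]] := exists_near_integral J w x0_box.
have EF i : i \in J ->
    EFc (#|A1| + #|A2| - 1) (w i) (round_half y) (~: round_half y) /\
    EFc (#|A1| + #|A2| - 1) (w i) (~: round_half y) (round_half y).
  move=> Ji; apply: EFc_round_half.
  - by case: i {Ji}.
  - exact: y_box.
  - by rewrite wy // /dot mulr_suml.
  - by rewrite (leq_trans y_small) // cardsC1 card_sum subn1.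
have [le_b | lt_b] := leP (util (u2 b) (~: round_half y)) (util (u2 b) (round_half y)).
- exists (~: round_half y); rewrite setCK; split=> a.
    by case: (EF (inl a)); rewrite ?inE.
  have [-> | ne_ab] := eqVneq a b; first exact: EFc_of_util_le.
  by case: (EF (inr a)); rewrite ?inE.
- exists (round_half y); split=> a.
    by case: (EF (inl a)); rewrite ?inE.
  have [-> | ne_ab] := eqVneq a b; first exact/EFc_of_util_le/ltW.
  by case: (EF (inr a)); rewrite ?inE.
Qed.
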